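(* Let $a, b \in \mathbb Z_g$ and let $1 \leq i < j \leq k$. Suppose that $\vec \theta \in \mathbb R^d$ and $\epsilon > 0$ have the property that for any pair of vectors $\vec x, \vec y \in (\mathbb Z_g)^k$, there are $z \in \mathbb Z$ and $\epsilon_1$ with $|\epsilon_1| < \epsilon$ such that $\vec \theta \cdot Z(\vec x) - \vec \theta \cdot Z(\vec y) = 2 \pi z + \epsilon_1$. Then there exists $\epsilon_2$ with $|\epsilon_2| < 2 \epsilon$ such that \[ \theta_{\{i,j\},a} + \theta_{\{i,j\},b} \equiv \theta_{\{i,j\},a+b} + \epsilon_2 \pmod{2 \pi},\] where the undefined value $\theta_{\{i,j\},0}$ is understood to be $0$.
   Context: Let $g\ge 2$, $k\ge 2$ be integers, $\mathbb Z_g$ the integers mod $g$, and $d=\binom{k}{2}(g-1)$. Index the coordinates of $\mathbb R^d$ by pairs $(\{i,j\},a)$ with $1\le i<j\le k$ and $a\in\mathbb Z_g\setminus\{0\}$. Define $Z:(\mathbb Z_g)^k\to\mathbb R^d$ by $[Z(\vec x)]_{\{i,j\},a}=1-1/g$ if $x_i-x_j=a$ and $-1/g$ otherwise. *)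

From HB Require Import structures.
From mathcomp Require Import all_boot all_order all_algebra.
From mathcomp Require Import all_classical all_reals all_analysis.
Set Implicit Arguments. Unset Strict Implicit. Unset Printing Implicit Defensive.
Import Order.TTheory GRing.Theory Num.Theory.
Local Open Scope ring_scope.

(* Coordinates of R^d are indexed by ({i,j}, a) with i < j in 'I_k (0-based
   version of 1 <= i < j <= k) and a in Z_g \ {0}.  A vector theta in R^d is
   represented by a function theta : 'I_k -> 'I_k -> 'Z_g -> R, of which only
   the values with i < j and a != 0 are ever used. *)

Definition Zvec (R : realType) (g k : nat) (x : 'I_k -> 'Z_g)
  (i j : 'I_k) (a : 'Z_g) : R :=
  if x i - x j == a then 1 - (g%:R)^-1 else - (g%:R)^-1.

Definition dotZ (R : realType) (g k : nat) (theta : 'I_k -> 'I_k -> 'Z_g -> R)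
  (x : 'I_k -> 'Z_g) : R :=
  \sum_(i : 'I_k) \sum_(j : 'I_k | (i < j)%N) \sum_(a : 'Z_g | a != 0)
     theta i j a * Zvec R x i j a.

Definition thetaz (R : realType) (g k : nat) (theta : 'I_k -> 'I_k -> 'Z_g -> R)
  (i j : 'I_k) (a : 'Z_g) : R :=
  if a == 0 then 0 else theta i j a.

From HB Require Import structures.
From mathcomp Require Import all_boot all_order all_algebra.
From mathcomp Require Import all_classical all_reals all_analysis.
From mathcomp Require Import ring lra.
Import Order.TTheory GRing.Theory Num.Theory.
Local Open Scope ring_scope.

(* Up to an additive constant, theta . Z(x) is the pairwise-interaction sum
   sum_{p<q} theta_{{p,q}, x_p - x_q}.  Take configurations x(s,t) that are
   zero except for x_i = s and x_j = t.  Every pair other than {i,j} sees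
   only one of s, t, so it cancels in the mixed second difference of
   theta . Z(x(s,t)) over s in {a, 0}, t in {-b, 0}, leaving
   theta_{a+b} - theta_a - theta_b.  The hypothesis bounds each of the two
   first differences by eps modulo 2 pi. *)

Section PairwiseSums.

Context {V R : zmodType} {k : nat}.

Definition mixed_diff (h : V -> V -> R) (s s' t t' : V) : R :=
  h s t - h s t' - (h s' t - h s' t').

Lemma mixed_diff_sum (I : Type) (r : seq I) (P : pred I)
    (h : I -> V -> V -> R) s s' t t' :
  mixed_diff (fun s t => \sum_(n <- r | P n) h n s t) s s' t t'
  = \sum_(n <- r | P n) mixed_diff (h n) s s' t t'.
Proof. by rewrite /mixed_diff -!sumrB. Qed.

Lemma mixed_diff_const_l (h : V -> V -> R) s s' t t' :
  (forall s s' t, h s t = h s' t) -> mixed_diff h s s' t t' = 0.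
Proof. by move=> hs; rewrite /mixed_diff (hs s s' t) (hs s s' t') subrr. Qed.

Lemma mixed_diff_const_r (h : V -> V -> R) s s' t t' :
  (forall s t t', h s t = h s t') -> mixed_diff h s s' t t' = 0.
Proof. by move=> ht; rewrite /mixed_diff (ht s t t') (ht s' t t') !subrr. Qed.

Definition pin2 (i j : 'I_k) (s t : V) : 'I_k -> V :=
  fun m => if m == i then s else if m == j then t else 0.

Definition pair_sum (f : 'I_k -> 'I_k -> V -> R) (x : 'I_k -> V) : R :=
  \sum_(p : 'I_k) \sum_(q : 'I_k | (p < q)%N) f p q (x p - x q).

Lemma mixed_diff_pair_sum (f : 'I_k -> 'I_k -> V -> R) (i j : 'I_k)
    s s' t t' : (i < j)%N ->
  mixed_diff (fun s t => pair_sum f (pin2 i j s t)) s s' t t'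
  = mixed_diff (fun s t => f i j (s - t)) s s' t t'.
Proof.
move=> lt_ij; have ne_ji : j != i by rewrite neq_ltn lt_ij orbT.
rewrite mixed_diff_sum (bigD1 i) //= big1 ?addr0 => [|p ne_pi].
  rewrite mixed_diff_sum (bigD1 j) //= big1 ?addr0 => [|q /andP[lt_iq ne_qj]].
    by rewrite /pin2 eqxx (negbTE ne_ji) eqxx.
  have ne_qi : q != i by rewrite neq_ltn lt_iq orbT.
  by apply: mixed_diff_const_r => s1 t1 t2; rewrite /pin2 eqxx !(negbTE ne_qi)
    !(negbTE ne_qj).
rewrite mixed_diff_sum big1 // => q lt_pq.
have [eq_qi | ne_qi] := eqVneq q i.
  have ne_pj : p != j by rewrite neq_ltn (ltn_trans _ lt_ij) // -eq_qi.
  by apply: mixed_diff_const_r => s1 t1 t2; rewrite /pin2 eq_qi eqxx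
    !(negbTE ne_pi) !(negbTE ne_pj).
by apply: mixed_diff_const_l => s1 s2 t1; rewrite /pin2 !(negbTE ne_pi)
  !(negbTE ne_qi).
Qed.

End PairwiseSums.

Section ThetaDotZ.

Context {R : realType} {g k : nat} (theta : 'I_k -> 'I_k -> 'Z_g -> R).

Lemma thetaz_sum_indicator (p q : 'I_k) (d : 'Z_g) :
  \sum_(c : 'Z_g | c != 0) theta p q c * (d == c)%:R = thetaz theta p q d.
Proof.
rewrite /thetaz; have [->|ne_d0] := eqVneq d 0.
  by rewrite big1 // => c ne_c0; rewrite eq_sym (negbTE ne_c0) mulr0.
rewrite (bigD1 d) //= eqxx mulr1 big1 ?addr0 // => c /andP[_ ne_cd].
by rewrite eq_sym (negbTE ne_cd) mulr0.
Qed.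

Lemma dotZE (x : 'I_k -> 'Z_g) :
  dotZ theta x = pair_sum (thetaz theta) x
    - \sum_(p : 'I_k) \sum_(q : 'I_k | (p < q)%N)
        \sum_(c : 'Z_g | c != 0) theta p q c * (g%:R)^-1.
Proof.
rewrite /dotZ /pair_sum -sumrB; apply: eq_bigr => p _.
rewrite -sumrB; apply: eq_bigr => q _.
rewrite -thetaz_sum_indicator -sumrB; apply: eq_bigr => c _.
by rewrite /Zvec; case: eqP => _ /=; ring.
Qed.

Lemma mixed_diff_dotZ (i j : 'I_k) (s s' t t' : 'Z_g) : (i < j)%N ->
  mixed_diff (fun s t => dotZ theta (pin2 i j s t)) s s' t t'
  = mixed_diff (fun s t => thetaz theta i j (s - t)) s s' t t'.
Proof.
by move=> lt_ij; rewrite -mixed_diff_pair_sum // /mixed_diff !dotZE; ring.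
Qed.

End ThetaDotZ.

Theorem lemma2p1 (R : realType) (g k : nat) (hg : (2 <= g)%N) (hk : (2 <= k)%N)
  (a b : 'Z_g) (i j : 'I_k) (hij : (i < j)%N)
  (theta : 'I_k -> 'I_k -> 'Z_g -> R) (eps : R) (heps : 0 < eps)
  (H : forall x y : 'I_k -> 'Z_g, exists (z : int) (eps1 : R),
        `|eps1| < eps /\
        dotZ theta x - dotZ theta y = 2 * pi * z%:~R + eps1) :
  exists eps2 : R, `|eps2| < 2 * eps /\
    exists z : int,
      thetaz theta i j a + thetaz theta i j b
      = thetaz theta i j (a + b) + eps2 + 2 * pi * z%:~R.
Proof.
have := mixed_diff_dotZ theta i j a 0 (- b) 0 hij.
(* [thetaz theta i j 0] computes to [0], so [subr0] also removes it. *)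
rewrite /mixed_diff /= opprK !subr0 add0r.
have [z1 [e1 [he1 ->]]] := H (pin2 i j a (- b)) (pin2 i j a 0).
have [z2 [e2 [he2 ->]]] := H (pin2 i j 0 (- b)) (pin2 i j 0 0).
move=> second_diff; exists (e2 - e1); split.
  by apply: (le_lt_trans (ler_normB _ _)); lra.
exists (z2 - z1); rewrite rmorphB /= mulrBr; lra.
Qed.
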